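(* Two orthogonal constraints are dependent if and only if they are the same line, possibly with opposite orientations. Three orthogonal constraints are dependent if and only if (i) two of them are dependent, or (ii) the three constraints are coplanar with $\ell_0$, or (iii) the three constraints are concurrent with $\ell_0$. Four orthogonal constraints are dependent if and only if (i) three of them are dependent, or (ii) the four constraints are in hyperboloidal position, or (iii) two of the lines are concurrent with $\ell_0$ and the other two are coplanar with $\ell_0$.
   Context: Fix coordinates in $\mathbb{R}^3$ so that the line $\ell_0$ is the $z$-axis. A constraint is an oriented line meeting $\ell_0$ in exactly one point; for $\lambda,\alpha,\delta\in\mathbb{R}$, $g(\lambda,\alpha,\delta)$ denotes the constraint through $(0,0,\lambda)$ and $(\cos\alpha,\sin\alpha,\lambda+\delta)$, oriented from the first point to the second (every constraint has this form). A constraint is orthogonal if it is orthogonal to $\ell_0$, i.e. $\delta=0$. The normal of $g=g(\lambda,\alpha,\delta)$ is $\eta_g=\big((1-\lambda)\sin\alpha,-(1-\lambda)\cos\alpha,\lambda\sin\alpha,-\lambda\cos\alpha\big)\in\mathbb{R}^4$. A family of constraints is dependent if their normals are linearly dependent. Lines are coplanar with $\ell_0$ if they lie in a common plane containing $\ell_0$, and concurrent with $\ell_0$ if they pass through a common point of $\ell_0$. Four or more lines are in hyperboloidal position if they belong to the same family of rulings of a nondegenerate quadric surface. *)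

From HB Require Import structures.
From mathcomp Require Import all_boot all_order all_algebra.
From mathcomp Require Import boolp classical_sets functions reals trigo.
Set Implicit Arguments. Unset Strict Implicit. Unset Printing Implicit Defensive.
Import Order.TTheory GRing.Theory Num.Theory.
Local Open Scope ring_scope.
Local Open Scope classical_set_scope.

Section Constraints.
Variable R : realType.

Definition cstr := (R * R * R)%type.
Definition c_lam (g : cstr) : R := g.1.1.
Definition c_alpha (g : cstr) : R := g.1.2.
Definition c_delta (g : cstr) : R := g.2.

Definition pt3 (x y z : R) : 'rV[R]_3 := \row_(i < 3) [:: x; y; z]`_i.

Definition l0 : set 'rV[R]_3 := [set p | exists t : R, p = pt3 0 0 t].

Definition c_base (g : cstr) : 'rV[R]_3 := pt3 0 0 (c_lam g).
Definition c_dir (g : cstr) : 'rV[R]_3 :=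
  pt3 (cos (c_alpha g)) (sin (c_alpha g)) (c_delta g).

Definition line_of (g : cstr) : set 'rV[R]_3 :=
  [set p | exists t : R, p = c_base g + t *: c_dir g].

Definition orthogonal_c (g : cstr) : Prop := c_delta g = 0.

Definition normal_c (g : cstr) : 'rV[R]_4 :=
  let l := c_lam g in let a := c_alpha g in
  \row_(i < 4) [:: (1 - l) * sin a; - ((1 - l) * cos a); l * sin a; - (l * cos a)]`_i.

Definition dependent_c (s : seq cstr) : Prop := ~~ free (map normal_c s).

Definition plane_c (n : 'rV[R]_3) (c : R) : set 'rV[R]_3 :=
  [set p | (p *m n^T) 0 0 = c].

Definition coplanar_l0 (s : seq cstr) : Prop :=
  exists (n : 'rV[R]_3) (c : R), n != 0 /\ l0 `<=` plane_c n c /\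
    forall g, g \in s -> line_of g `<=` plane_c n c.

Definition concurrent_l0 (s : seq cstr) : Prop :=
  exists q : 'rV[R]_3, l0 q /\ forall g, g \in s -> line_of g q.

(* quadric surfaces: zero set of the quadratic form of a symmetric 4x4
   matrix in homogeneous coordinates (x,y,z,1); nondegenerate = det <> 0 *)
Definition quad_val (A : 'M[R]_(3 + 1)) (p : 'rV[R]_3) : R :=
  let ph : 'rV[R]_(3 + 1) := row_mx p (1 : 'rV[R]_1) in (ph *m A *m ph^T) 0 0.

Definition nondeg_quadric (A : 'M[R]_(3 + 1)) : Prop := A^T = A /\ \det A != 0.

Definition on_quadric (A : 'M[R]_(3 + 1)) (g : cstr) : Prop :=
  forall p, line_of g p -> quad_val A p = 0.

Definition parallel_c (g h : cstr) : Prop := exists k : R, c_dir g = k *: c_dir h.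

(* lines on a nondegenerate (doubly ruled) quadric lie in the same family of
   rulings iff they coincide or are projectively disjoint (disjoint in R^3
   and not parallel_c, i.e. not meeting at infinity); lines of opposite
   families always meet in projective space. *)
Definition same_ruling (g h : cstr) : Prop :=
  line_of g = line_of h \/ (line_of g `&` line_of h = set0 /\ ~ parallel_c g h).

Definition hyperboloidal (s : seq cstr) : Prop :=
  exists A : 'M[R]_(3 + 1), nondeg_quadric A /\
    (forall g, g \in s -> on_quadric A g) /\
    (forall g h, g \in s -> h \in s -> same_ruling g h).

End Constraints.

From HB Require Import structures.
From mathcomp Require Import all_boot all_order all_algebra.
From mathcomp Require Import boolp classical_sets functions reals trigo.
From mathcomp Require Import ring lra.
Import Order.TTheory GRing.Theory Num.Theory.
Local Open Scope ring_scope.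
Local Open Scope classical_set_scope.
Set Implicit Arguments. Unset Strict Implicit. Unset Printing Implicit Defensive.

(** For an orthogonal constraint g with height λ and direction (cos α, sin α),
    the normal η_g is the image, under a fixed invertible linear map, of the
    rank-one tensor (1, λ) ⊗ (cos α, sin α), with coordinates
    (cos α, sin α, λ cos α, λ sin α).  Two rank-one tensors are proportional
    iff both factors are, which is the line criterion.  Three of them are
    dependent only if two are, or if all first factors agree (the lines are
    concurrent with ℓ0) or all second factors are proportional (coplanar
    with ℓ0).  Four of them, in a four-dimensional space, are dependent iff a
    nonzero bilinear form vanishes on them, i.e. each line satisfies
    (pλ + q) cos α + (rλ + w) sin α = 0.  When pw ≠ qr the lines lie in one
    ruling of the hyperbolic paraboloid x (pz + q) + y (rz + w) = 0; when
    pw = qr the form factors as (aλ + b)(m0 cos α + m1 sin α), so each line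
    either passes through the point λ = -b/a of ℓ0 or lies in the plane
    m0 x + m1 y = 0, and distributing four lines among these two classes
    gives the remaining cases. *)

Lemma left_kernel_right_kernel (F : fieldType) n (A : 'M[F]_n) :
  (exists2 x : 'rV_n, x != 0 & x *m A = 0) <-> (exists2 y : 'rV_n, y != 0 & y *m A^T = 0).
Proof. by split=> /det0P; rewrite -det_tr ?trmxK => /det0P. Qed.

Lemma two_class_split4 (T : Type) (Z P : T -> Prop) (D3 : T -> T -> T -> Prop)
    (C2 P2 : T -> T -> Prop) (x1 x2 x3 x4 : T) :
  (forall a b c, Z a -> Z b -> Z c -> D3 a b c) ->
  (forall a b c, P a -> P b -> P c -> D3 a b c) ->
  (forall a b, Z a -> Z b -> C2 a b) -> (forall a b, P a -> P b -> P2 a b) ->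
  Z x1 \/ P x1 -> Z x2 \/ P x2 -> Z x3 \/ P x3 -> Z x4 \/ P x4 ->
  (D3 x1 x2 x3 \/ D3 x1 x2 x4 \/ D3 x1 x3 x4 \/ D3 x2 x3 x4) \/
  ((C2 x1 x2 /\ P2 x3 x4) \/ (C2 x1 x3 /\ P2 x2 x4) \/ (C2 x1 x4 /\ P2 x2 x3) \/
   (C2 x2 x3 /\ P2 x1 x4) \/ (C2 x2 x4 /\ P2 x1 x3) \/ (C2 x3 x4 /\ P2 x1 x2)).
Proof.
move=> HZ HP HC HQ [] h1 [] h2 [] h3 [] h4;
  first [ left; first [ left; by [apply: HZ | apply: HP]
                      | right; left; by [apply: HZ | apply: HP]
                      | right; right; left; by [apply: HZ | apply: HP]
                      | right; right; right; by [apply: HZ | apply: HP] ]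
        | right; first [ left; split; [exact: HC | exact: HQ]
                       | right; left; split; [exact: HC | exact: HQ]
                       | right; right; left; split; [exact: HC | exact: HQ]
                       | do 3 right; left; split; [exact: HC | exact: HQ]
                       | do 4 right; left; split; [exact: HC | exact: HQ]
                       | do 5 right; split; [exact: HC | exact: HQ] ] ].
Qed.

Lemma sum_zip_tnth (A V : nmodType) (T : Type) (k : seq A) (s : seq T) (F : A -> T -> V) :
  size k = size s ->
  \sum_(x <- zip k s) F x.1 x.2 = \sum_(i < size s) F (nth 0 k i) (tnth (in_tuple s) i).
Proof.
move=> ks; rewrite {1}[s](esym (map_tnth_enum (in_tuple s))).
rewrite {1}(_ : k = [seq nth 0 k i | i : 'I_(size s) <- enum 'I_(size s)]); last first.
  by rewrite (map_comp (nth 0 k) val) val_enum_ord -ks -/(mkseq _ _) mkseq_nth.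
by rewrite zip_map big_map big_enum.
Qed.

Section Row4.
Variable V : nmodType.

Lemma row4E (v : 'rV[V]_4) : v = \row_j [:: v 0 0; v 0 1; v 0 2; v 0 3]`_j.
Proof. by apply/rowP => -[[|[|[|[|//]]]] j4]; rewrite mxE; congr (v 0 _); apply: val_inj. Qed.

Lemma rV4_eq0 (v : 'rV[V]_4) : v = 0 <-> [/\ v 0 0 = 0, v 0 1 = 0, v 0 2 = 0 & v 0 3 = 0].
Proof.
split=> [->|[v0 v1 v2 v3]]; first by rewrite !mxE.
by rewrite [v]row4E v0 v1 v2 v3; apply/rowP => -[[|[|[|[|//]]]] ?]; rewrite !mxE.
Qed.

Lemma rV4_neq0 (v : 'rV[V]_4) :
  v != 0 <-> v 0 0 != 0 \/ v 0 1 != 0 \/ v 0 2 != 0 \/ v 0 3 != 0.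
Proof.
split=> [v0 | ]; last by case=> [|[|[|]]]; apply: contraNneq => ->; rewrite mxE.
have [a|] := eqVneq (v 0 0) 0; last by left.
have [b|] := eqVneq (v 0 1) 0; last by right; left.
have [c|] := eqVneq (v 0 2) 0; last by right; right; left.
have [d|] := eqVneq (v 0 3) 0; last by right; right; right.
by move: v0; rewrite (proj2 (rV4_eq0 v)) ?eqxx.
Qed.

End Row4.

Section PlaneAlgebra.
Variable F : realFieldType.
Implicit Types a b c d k l m p q r s w x y z : F.

Lemma sqr1_neq0 d : d ^+ 2 = 1 -> d != 0.
Proof. by apply: contra_eqN => /eqP ->; rewrite expr0n eq_sym oner_eq0. Qed.

Lemma unit_vector_neq0 c s : c ^+ 2 + s ^+ 2 = 1 -> c != 0 \/ s != 0.
Proof.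
have [-> u|] := eqVneq c 0; last by left.
by right; apply: contra_eqN u => /eqP->; rewrite expr0n addr0 eq_sym oner_eq0.
Qed.

Lemma eq0_of_mul_pair x y z : x != 0 \/ y != 0 -> x * z = 0 -> y * z = 0 -> z = 0.
Proof. by move=> [] nz xz yz; apply: (mulfI nz); rewrite mulr0. Qed.

Lemma unit_vectors_proportional c1 s1 c2 s2 :
  c1 ^+ 2 + s1 ^+ 2 = 1 -> c2 ^+ 2 + s2 ^+ 2 = 1 -> s1 * c2 = s2 * c1 ->
  exists2 d, d ^+ 2 = 1 & c2 = d * c1 /\ s2 = d * s1.
Proof.
move=> u1 u2 p; exists (c1 * c2 + s1 * s2).
  have -> : (c1 * c2 + s1 * s2) ^+ 2
      = (c1 ^+ 2 + s1 ^+ 2) * (c2 ^+ 2 + s2 ^+ 2) - (s1 * c2 - s2 * c1) ^+ 2 by ring.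
  by rewrite u1 u2 p subrr expr0n subr0 mulr1.
have e x : x * (s1 * c2) = x * (s2 * c1) by rewrite p.
have f x : x * (c1 ^+ 2 + s1 ^+ 2) = x by rewrite u1 mulr1.
by split; [have := e s1; have := f c2 | have := e c1; have := f s2]; lra.
Qed.

Lemma parallel_of_common_normal m0 m1 c1 s1 c2 s2 : m0 != 0 \/ m1 != 0 ->
  m0 * c1 + m1 * s1 = 0 -> m0 * c2 + m1 * s2 = 0 -> s1 * c2 = s2 * c1.
Proof.
move=> m01 e1 e2; have m x := congr1 ( *%R x).
apply/eqP; rewrite -subr_eq0; apply/eqP/(eq0_of_mul_pair m01).
  by have := m s1 _ _ e2; have := m s2 _ _ e1; lra.
by have := m c2 _ _ e1; have := m c1 _ _ e2; lra.
Qed.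

Lemma eq_of_affine_roots a b l1 l2 : a != 0 \/ b != 0 ->
  a * l1 + b = 0 -> a * l2 + b = 0 -> l1 = l2.
Proof.
move=> ab e1 e2; have [a0|a0] := eqVneq a 0; last by apply: (mulfI a0); lra.
have b0 : b = 0 by move: e1; rewrite a0; lra.
by case: ab; rewrite ?a0 ?b0 eqxx.
Qed.

Lemma quadratic_three_roots a b c l1 l2 l3 :
  l1 != l2 -> l1 != l3 -> l2 != l3 ->
  a * l1 ^+ 2 + b * l1 + c = 0 -> a * l2 ^+ 2 + b * l2 + c = 0 ->
  a * l3 ^+ 2 + b * l3 + c = 0 -> [/\ a = 0, b = 0 & c = 0].
Proof.
move=> n12 n13 n23 e1 e2 e3.
have slope l l' : l != l' -> a * l ^+ 2 + b * l + c = 0 ->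
    a * l' ^+ 2 + b * l' + c = 0 -> a * (l + l') + b = 0.
  rewrite -subr_eq0 => nll' e e'; apply: (mulfI nll'); rewrite mulr0.
  by transitivity (a * l ^+ 2 + b * l + c - (a * l' ^+ 2 + b * l' + c)); [ring|lra].
have s12 := slope _ _ n12 e1 e2; have s13 := slope _ _ n13 e1 e3.
have a0 : a = 0 by move: n23; rewrite -subr_eq0 => /mulfI; apply; lra.
have b0 : b = 0 by move: s12; rewrite a0; lra.
by split=> //; move: e1; rewrite a0 b0; lra.
Qed.

Lemma rank_one_pair k1 k2 l1 l2 c1 s1 c2 s2 :
  c1 ^+ 2 + s1 ^+ 2 = 1 -> c2 ^+ 2 + s2 ^+ 2 = 1 -> k1 != 0 \/ k2 != 0 ->
  k1 * c1 + k2 * c2 = 0 -> k1 * s1 + k2 * s2 = 0 ->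
  k1 * (l1 * c1) + k2 * (l2 * c2) = 0 -> k1 * (l1 * s1) + k2 * (l2 * s2) = 0 ->
  l1 = l2 /\ s1 * c2 = s2 * c1.
Proof.
move=> u1 u2 k12 e1 e2 e3 e4; have m x := congr1 ( *%R x).
split; apply/eqP; rewrite -subr_eq0; apply/eqP/(eq0_of_mul_pair k12).
- have := m (k1 * (l1 - l2)) _ _ u1; have := m c1 _ _ e3; have := m s1 _ _ e4.
  by have := m (l2 * c1) _ _ e1; have := m (l2 * s1) _ _ e2; lra.
- have := m (k2 * (l1 - l2)) _ _ u2; have := m c2 _ _ e3; have := m s2 _ _ e4.
  by have := m (l1 * c2) _ _ e1; have := m (l1 * s2) _ _ e2; lra.
- by have := m c2 _ _ e2; have := m s2 _ _ e1; lra.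
- by have := m c1 _ _ e2; have := m s1 _ _ e1; lra.
Qed.

Lemma rank_one_triple k1 k2 k3 l1 l2 l3 c1 s1 c2 s2 c3 s3 :
  k1 != 0 -> k2 != 0 -> k3 != 0 ->
  k1 * c1 + k2 * c2 + k3 * c3 = 0 -> k1 * s1 + k2 * s2 + k3 * s3 = 0 ->
  k1 * (l1 * c1) + k2 * (l2 * c2) + k3 * (l3 * c3) = 0 ->
  k1 * (l1 * s1) + k2 * (l2 * s2) + k3 * (l3 * s3) = 0 ->
  (l1 = l2 /\ l1 = l3) \/ (s1 * c2 = s2 * c1 /\ s1 * c3 = s3 * c1).
Proof.
move=> k1n k2n k3n e1 e2 e3 e4; have m x := congr1 ( *%R x).
set x12 := s1 * c2 - s2 * c1.
have p1 : k2 * x12 + k3 * (s1 * c3 - s3 * c1) = 0.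
  by have := m s1 _ _ e1; have := m c1 _ _ e2; rewrite /x12; lra.
have q1 : k2 * (l2 - l3) * x12 = 0.
  have := m l3 _ _ p1; have := m s1 _ _ e3; have := m c1 _ _ e4; rewrite /x12; lra.
have q2 : k1 * (l1 - l3) * x12 = 0.
  have := m (l3 * s2) _ _ e1; have := m (l3 * c2) _ _ e2.
  have := m s2 _ _ e3; have := m c2 _ _ e4; rewrite /x12; lra.
have [x0|xn] := eqVneq x12 0.
  right; split; apply/eqP; rewrite -subr_eq0; apply/eqP; first exact: x0.
  by apply: (mulfI k3n); move: p1; rewrite x0; lra.
move/eqP: q1; rewrite !mulf_eq0 (negPf k2n) (negPf xn) orbF subr_eq0 => /eqP ->.
move/eqP: q2; rewrite !mulf_eq0 (negPf k1n) (negPf xn) orbF subr_eq0 => /eqP ->.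
by left.
Qed.

Lemma plane_triple_dependent a1 b1 a2 b2 a3 b3 : exists k1 k2 k3,
  [/\ k1 != 0 \/ k2 != 0 \/ k3 != 0, k1 * a1 + k2 * a2 + k3 * a3 = 0
    & k1 * b1 + k2 * b2 + k3 * b3 = 0].
Proof.
have [d0|dn] := eqVneq (a1 * b2 - a2 * b1) 0; last first.
  exists (a2 * b3 - a3 * b2), (a3 * b1 - a1 * b3), (a1 * b2 - a2 * b1).
  by split; [right; right | ring | ring].
have [a10|a1n] := eqVneq a1 0; last first.
  by exists a2, (- a1), 0; split; [right; left; rewrite oppr_eq0 | |]; lra.
have [b10|b1n] := eqVneq b1 0; last first.
  by exists b2, (- b1), 0; split; [right; left; rewrite oppr_eq0 | |]; lra.
by exists 1, 0, 0; split; [left; exact: oner_neq0 | rewrite a10 | rewrite b10]; ring.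
Qed.

Lemma rank_one_form p q r w :
  p != 0 \/ q != 0 \/ r != 0 \/ w != 0 -> p * w = q * r ->
  exists a b m0 m1, [/\ a != 0 \/ b != 0, m0 != 0 \/ m1 != 0 &
    forall l c s, (p * l + q) * c + (r * l + w) * s = (a * l + b) * (m0 * c + m1 * s)].
Proof.
move=> pqrw det0; have one_neq0 : (1 : F) != 0 := oner_neq0 F.
have [p0|pn] := eqVneq p 0; last first.
  exists p, q, 1, (r / p); split; [by left | by left | move=> l c s].
  have -> : w = q * r / p by apply: (mulfI pn); rewrite mulrCA divff // mulr1.
  by field.
have [q0|qn] := eqVneq q 0.
  exists r, w, 0, 1; split; [|by right|by move=> l c s; rewrite p0 q0; ring].
  by move: pqrw; rewrite p0 q0 eqxx => -[|[|]].
have r0 : r = 0 by apply: (mulfI qn); rewrite -det0 p0; ring.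
by exists 0, 1, q, w; split; [right|left|move=> l c s; rewrite p0 r0; ring].
Qed.

End PlaneAlgebra.

Section Constraints.
Variable R : realType.
Implicit Types (g h : cstr R) (s : seq (cstr R)) (k : seq R).

Local Notation cs g := (cos (c_alpha g)).
Local Notation sn g := (sin (c_alpha g)).

(** * Orthogonal constraints as lines *)

Lemma pt3_inj (a b c a' b' c' : R) :
  pt3 a b c = pt3 a' b' c' -> [/\ a = a', b = b' & c = c'].
Proof. by move=> /rowP E; have := E 0; have := E 1; have := E 2; rewrite !mxE /= => -> -> ->. Qed.

Lemma pt3_0 : pt3 0 0 0 = 0 :> 'rV[R]_3.
Proof. by apply/rowP => j; rewrite !mxE; case: j => -[|[|[|]]]. Qed.

Lemma pt3_addZ (a b c a' b' c' t : R) :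
  pt3 a b c + t *: pt3 a' b' c' = pt3 (a + t * a') (b + t * b') (c + t * c').
Proof. by apply/rowP => j; rewrite !mxE; case: j => -[|[|[|]]]. Qed.

Lemma pt3_dot (x y z a b c : R) : (pt3 x y z *m (pt3 a b c)^T) 0 0 = x * a + y * b + z * c.
Proof. by rewrite !mxE !big_ord_recl !big_ord0 !mxE /= addr0 addrA. Qed.

Lemma line_of_orthogonal g p : orthogonal_c g ->
  line_of g p <-> exists t, p = pt3 (t * cs g) (t * sn g) (c_lam g).
Proof.
rewrite /orthogonal_c /line_of /c_base /c_dir => g0 /=.
by split=> -[t ->]; exists t; rewrite pt3_addZ g0 mulr0 !add0r addr0.
Qed.

Definition parallel_dir g h := sn g * cs h = sn h * cs g.

Lemma line_of_eqE g h : orthogonal_c g -> orthogonal_c h ->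
  line_of g = line_of h <-> c_lam g = c_lam h /\ parallel_dir g h.
Proof.
move=> og oh; split=> [gh | [lgh /(unit_vectors_proportional (cos2Dsin2 _) (cos2Dsin2 _))]].
  have /(line_of_orthogonal _ oh)[t /pt3_inj[ec es ->]] :
      line_of h (pt3 (1 * cs g) (1 * sn g) (c_lam g)).
    by rewrite -gh; apply/(line_of_orthogonal _ og); exists 1.
  by split=> //; move: ec es; rewrite /parallel_dir !mul1r => -> ->; ring.
move=> [d d2 [ch sh]]; apply/seteqP; split=> p.
  move=> /(line_of_orthogonal _ og)[t ->]; apply/(line_of_orthogonal _ oh).
  have dd x : t * x = t * d * (d * x) by rewrite mulrA -(mulrA t) -expr2 d2 mulr1.
  by exists (t * d); rewrite ch sh -lgh -!dd.
move=> /(line_of_orthogonal _ oh)[t ->]; apply/(line_of_orthogonal _ og).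
by exists (t * d); rewrite ch sh lgh !mulrA.
Qed.

Lemma concurrent_l0E s : {in s, forall g, orthogonal_c g} ->
  concurrent_l0 s <-> exists t, {in s, forall g, c_lam g = t}.
Proof.
move=> os; split=> [[q [[t ->] sq]] | [t st]].
  by exists t => g gs; have /(line_of_orthogonal _ (os g gs))[_ /pt3_inj[_ _ ->]] := sq g gs.
exists (pt3 0 0 t); split=> [|g gs]; first by exists t.
by apply/(line_of_orthogonal _ (os g gs)); exists 0; rewrite !mul0r st.
Qed.

Lemma coplanar_l0E s : {in s, forall g, orthogonal_c g} ->
  coplanar_l0 s <->
  exists m0 m1, (m0 != 0 \/ m1 != 0) /\ {in s, forall g, m0 * cs g + m1 * sn g = 0}.
Proof.
move=> os; split=> [[n [c [n0 [l0n sH]]]] | [m0 [m1 [m01 sm]]]].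
  have En : n = pt3 (n 0 0) (n 0 1) (n 0 2).
    by apply/rowP => -[[|[|[|//]]] j3]; rewrite !mxE /=; congr (n 0 _); apply: val_inj.
  have plane0 z : (pt3 0 0 z *m n^T) 0 0 = z * n 0 2 by rewrite {1}En pt3_dot; ring.
  have c0 : c = 0 by have := l0n _ (ex_intro _ 0 erefl); rewrite /plane_c /= plane0 mul0r.
  have n2 : n 0 2 = 0 by have := l0n _ (ex_intro _ 1 erefl); rewrite /plane_c /= plane0 c0 mul1r.
  exists (n 0 0), (n 0 1); split.
    have [a|] := eqVneq (n 0 0) 0; last by left.
    have [b|] := eqVneq (n 0 1) 0; last by right.
    by move: n0; rewrite En a b n2 pt3_0 eqxx.
  move=> g gs; have := sH g gs (pt3 (1 * cs g) (1 * sn g) (c_lam g)).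
  rewrite /plane_c /= {1}En pt3_dot n2 c0 => /(_ _); rewrite (line_of_orthogonal _ (os g gs)).
  by move=> /(_ (ex_intro _ 1 erefl)); lra.
exists (pt3 m0 m1 0), 0; split; [|split].
- by apply/eqP; rewrite -pt3_0 => /pt3_inj[m0E m1E _]; case: m01; rewrite ?m0E ?m1E eqxx.
- by move=> p [t ->]; rewrite /plane_c /= pt3_dot; ring.
- move=> g gs p /(line_of_orthogonal _ (os g gs))[t ->]; rewrite /plane_c /= pt3_dot.
  by have := congr1 ( *%R t) (sm g gs); lra.
Qed.

Lemma concurrent3E g1 g2 g3 : orthogonal_c g1 -> orthogonal_c g2 -> orthogonal_c g3 ->
  concurrent_l0 [:: g1; g2; g3] <-> c_lam g1 = c_lam g2 /\ c_lam g1 = c_lam g3.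
Proof.
move=> o1 o2 o3; rewrite concurrent_l0E => [|g]; last by rewrite !inE => /or3P[]/eqP->.
split=> [[t lt] | [l12 l13]]; first by rewrite !lt ?inE ?eqxx ?orbT.
by exists (c_lam g1) => g; rewrite !inE => /or3P[]/eqP->.
Qed.

Lemma coplanar3E g1 g2 g3 : orthogonal_c g1 -> orthogonal_c g2 -> orthogonal_c g3 ->
  coplanar_l0 [:: g1; g2; g3] <-> parallel_dir g1 g2 /\ parallel_dir g1 g3.
Proof.
move=> o1 o2 o3; rewrite coplanar_l0E => [|g]; last by rewrite !inE => /or3P[]/eqP->.
split=> [[m0 [m1 [m01 m123]]] | [p12 p13]].
  by split; apply: (parallel_of_common_normal m01); apply: m123; rewrite !inE eqxx ?orbT.
exists (- sn g1), (cs g1); split.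
  by case: (unit_vector_neq0 (cos2Dsin2 (c_alpha g1))); [right | left; rewrite oppr_eq0].
by move=> g; rewrite !inE => /or3P[]/eqP->; rewrite /parallel_dir in p12 p13; lra.
Qed.

(** * Dependence of two and three constraints *)

Definition null_comb k s := let ks := zip k s in
  [/\ \sum_(x <- ks) x.1 * cs x.2 = 0, \sum_(x <- ks) x.1 * sn x.2 = 0,
      \sum_(x <- ks) x.1 * (c_lam x.2 * cs x.2) = 0
    & \sum_(x <- ks) x.1 * (c_lam x.2 * sn x.2) = 0].

Lemma sum_normal_eq0 (kg : seq (R * cstr R)) :
  \sum_(x <- kg) x.1 *: normal_c x.2 = 0 <-> null_comb (unzip1 kg) (unzip2 kg).
Proof.
pose M f := \sum_(x <- kg) x.1 * f x.2.
have E j a1 f1 a2 f2 : (forall g, normal_c g 0 j = a1 * f1 g + a2 * f2 g) ->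
    (\sum_(x <- kg) x.1 *: normal_c x.2) 0 j = a1 * M f1 + a2 * M f2.
  move=> Ef; rewrite summxE /M !mulr_sumr -big_split.
  by apply: eq_bigr => x _; rewrite mxE Ef /=; ring.
rewrite /null_comb zip_unzip rV4_eq0.
rewrite (E 0 1 (fun g => sn g) (-1) (fun g => c_lam g * sn g))
  ?(E 1 1 (fun g => c_lam g * cs g) (-1) (fun g => cs g))
  ?(E 2 1 (fun g => c_lam g * sn g) 0 (fun g => cs g))
  ?(E 3 (-1) (fun g => c_lam g * cs g) 0 (fun g => cs g)) /M;
  try by move=> g; rewrite !mxE /=; ring.
by split=> -[]; split; lra.
Qed.

Lemma dependentP s :
  dependent_c s <-> exists k, [/\ size k = size s, has (predC1 0) k & null_comb k s].
Proof.
have combE k : size k = size s ->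
    \sum_(i < size s) nth 0 k i *: normal_c (tnth (in_tuple s) i) = 0 <-> null_comb k s.
  move=> ks; rewrite -(sum_zip_tnth (fun a g => a *: normal_c g) ks) sum_normal_eq0.
  by rewrite unzip1_zip ?unzip2_zip ?ks.
set X := map_tuple (@normal_c R) (in_tuple s).
have Xi (i : 'I_(size s)) : X`_i = normal_c (tnth (in_tuple s) i) by rewrite -tnth_nth tnth_map.
rewrite /dependent_c -[map _ _]/(tval X); split.
- move=> /freeP/existsNP[kf /not_implyP[kf0 /existsNP[i kfi]]].
  exists [seq kf j | j <- enum 'I_(size s)].
  have kfE (j : 'I_(size s)) : nth 0 [seq kf j | j <- enum 'I_(size s)] j = kf j.
    by rewrite (nth_map j) ?nth_ord_enum // size_enum_ord.
  split; first by rewrite size_map size_enum_ord.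
    by apply/hasP; exists (kf i); [apply: map_f; rewrite mem_enum | exact/eqP].
  apply/combE; first by rewrite size_map size_enum_ord.
  by apply: etrans kf0; apply: eq_bigr => j _; rewrite kfE Xi.
- move=> [k [ks /hasP[a ka a0] /(combE _ ks) k0]]; apply/negP => /freeP free0.
  have ia : (index a k < size s)%N by rewrite -ks index_mem.
  have kz : forall i : 'I_(size s), nth 0 k i = 0.
    by apply: free0; apply: etrans k0; apply: eq_bigr => j _; rewrite Xi.
  by move/eqP: a0; apply; rewrite -(kz (Ordinal ia)) /= nth_index.
Qed.

Lemma dependent_mask m s : dependent_c (mask m s) -> dependent_c s.
Proof.
move: (mask_subseq m s) => /perm_to_subseq[u /(perm_map (@normal_c R)) su].
by rewrite /dependent_c (perm_free su) map_cat; apply: contra; apply: catl_free.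
Qed.

Lemma dependent2E g1 g2 :
  dependent_c [:: g1; g2] <-> c_lam g1 = c_lam g2 /\ parallel_dir g1 g2.
Proof.
rewrite dependentP; split=> [[k [ks k12 nc]] | [l12 p12]].
  case: k ks k12 nc => [|k1 [|k2 []]] // _ k12.
  rewrite /null_comb /= !big_cons !big_nil /= => -[e1 e2 e3 e4].
  apply: (rank_one_pair (cos2Dsin2 _) (cos2Dsin2 _) (k1 := k1) (k2 := k2)); try lra.
  by move: k12 => /hasP[a]; rewrite !inE => /orP[]/eqP-> ?; [left|right].
have [d _ [c2 s2]] := unit_vectors_proportional (cos2Dsin2 _) (cos2Dsin2 _) p12.
exists [:: d; -1]; split=> //=; first by rewrite oppr_eq0 oner_eq0 orbT.
by rewrite /null_comb /= !big_cons !big_nil /= c2 s2 -l12; split; ring.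
Qed.

Lemma dependent2_of_null_comb g1 g2 (a b : R) :
  a != 0 \/ b != 0 -> null_comb [:: a; b] [:: g1; g2] -> dependent_c [:: g1; g2].
Proof.
by move=> ab nc; apply/dependentP; exists [:: a; b]; split=> //=; case: ab => ->; rewrite ?orbT.
Qed.

Lemma dependent3_cases g1 g2 g3 : dependent_c [:: g1; g2; g3] ->
  (dependent_c [:: g1; g2] \/ dependent_c [:: g1; g3] \/ dependent_c [:: g2; g3]) \/
  (c_lam g1 = c_lam g2 /\ c_lam g1 = c_lam g3) \/
  (parallel_dir g1 g2 /\ parallel_dir g1 g3).
Proof.
move=> /dependentP[k [ks k123 nc]].
case: k ks k123 nc => [|k1 [|k2 [|k3 []]]] // _ /= k123.
rewrite /null_comb /= !big_cons !big_nil /= => -[e1 e2 e3 e4].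
have pair_nc (a b : R) x y : null_comb [:: a; b] [:: x; y] <->
    [/\ a * cs x + b * cs y = 0, a * sn x + b * sn y = 0,
        a * (c_lam x * cs x) + b * (c_lam y * cs y) = 0
      & a * (c_lam x * sn x) + b * (c_lam y * sn y) = 0].
  by rewrite /null_comb /= !big_cons !big_nil /= !addr0.
have [k1z|k1n] := eqVneq k1 0.
  move: k123 e1 e2 e3 e4; rewrite k1z eqxx /= orbF => /orP k23 *.
  by left; right; right; apply: (dependent2_of_null_comb k23); apply/pair_nc; split; lra.
have [k2z|k2n] := eqVneq k2 0.
  move: e1 e2 e3 e4; rewrite k2z => *; left; right; left.
  by apply: (@dependent2_of_null_comb _ _ k1 k3 (or_introl k1n)); apply/pair_nc; split; lra.
have [k3z|k3n] := eqVneq k3 0.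
  move: e1 e2 e3 e4; rewrite k3z => *; left; left.
  by apply: (@dependent2_of_null_comb _ _ k1 k2 (or_introl k1n)); apply/pair_nc; split; lra.
by right; apply: (rank_one_triple k1n k2n k3n); lra.
Qed.

Lemma dependent3_of_lam_eq g1 g2 g3 :
  c_lam g1 = c_lam g2 -> c_lam g1 = c_lam g3 -> dependent_c [:: g1; g2; g3].
Proof.
move=> l12 l13; have [k1 [k2 [k3 [k0 ec es]]]] :=
  plane_triple_dependent (cs g1) (sn g1) (cs g2) (sn g2) (cs g3) (sn g3).
apply/dependentP; exists [:: k1; k2; k3]; split=> //=.
  by rewrite orbF; case: k0 => [|[|]] ->; rewrite ?orbT.
rewrite /null_comb /= !big_cons !big_nil /= -l12 -l13.
by have := congr1 ( *%R (c_lam g1)) ec; have := congr1 ( *%R (c_lam g1)) es; split; lra.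
Qed.

Lemma dependent3_of_parallel_dir g1 g2 g3 :
  parallel_dir g1 g2 -> parallel_dir g1 g3 -> dependent_c [:: g1; g2; g3].
Proof.
move=> p12 p13.
have [d2 d22 [c2 s2]] := unit_vectors_proportional (cos2Dsin2 _) (cos2Dsin2 _) p12.
have [d3 d32 [c3 s3]] := unit_vectors_proportional (cos2Dsin2 _) (cos2Dsin2 _) p13.
have [m1 [m2 [m3 [m0 e1 el]]]] :=
  plane_triple_dependent 1 (c_lam g1) 1 (c_lam g2) 1 (c_lam g3).
apply/dependentP; exists [:: m1; m2 * d2; m3 * d3]; split=> //=.
  rewrite orbF !mulf_eq0 (negPf (sqr1_neq0 d22)) (negPf (sqr1_neq0 d32)) !orbF.
  by case: m0 => [|[|]] ->; rewrite ?orbT.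
have sq (d x y : R) : d ^+ 2 = 1 -> x * d * (d * y) = x * y.
  by move=> dd; rewrite mulrA -(mulrA x) -expr2 dd mulr1.
rewrite /null_comb /= !big_cons !big_nil /= c2 s2 c3 s3 !(mulrCA (c_lam _)) !sq //.
have m (x : R) := congr1 ( *%R x).
by have := m (cs g1) _ _ e1; have := m (sn g1) _ _ e1; have := m (cs g1) _ _ el;
  have := m (sn g1) _ _ el; split; lra.
Qed.

Lemma dependent3E g1 g2 g3 : dependent_c [:: g1; g2; g3] <->
  (dependent_c [:: g1; g2] \/ dependent_c [:: g1; g3] \/ dependent_c [:: g2; g3]) \/
  (c_lam g1 = c_lam g2 /\ c_lam g1 = c_lam g3) \/
  (parallel_dir g1 g2 /\ parallel_dir g1 g3).
Proof.
split=> [|[[d12 | [d13 | d23]] | [[l12 l13] | [p12 p13]]]]; first exact: dependent3_cases.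
- by apply: (dependent_mask (m := [:: true; true; false])).
- by apply: (dependent_mask (m := [:: true; false; true])).
- by apply: (dependent_mask (m := [:: false; true; true])).
- exact: dependent3_of_lam_eq.
- exact: dependent3_of_parallel_dir.
Qed.

(** * Four constraints: bilinear forms and quadrics *)

Definition bform (p q r w : R) g := (p * c_lam g + q) * cs g + (r * c_lam g + w) * sn g.

Definition vanishing_form s := exists p q r w,
  (p != 0 \/ q != 0 \/ r != 0 \/ w != 0) /\ {in s, forall g, bform p q r w g = 0}.

Lemma vanishing_form_sub s t : {subset t <= s} -> vanishing_form s -> vanishing_form t.
Proof. by move=> ts [p [q [r [w [pqrw fs]]]]]; exists p, q, r, w; split=> // g /ts/fs. Qed.

Lemma dependent4E g1 g2 g3 g4 :
  dependent_c [:: g1; g2; g3; g4] <-> vanishing_form [:: g1; g2; g3; g4].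
Proof.
pose A := \matrix_(i < 4, j < 4) (let g := nth g1 [:: g1; g2; g3; g4] i in
  [:: c_lam g * cs g; cs g; c_lam g * sn g; sn g]`_j).
apply: (@iff_trans _ (exists2 x : 'rV_4, x != 0 & x *m A = 0)).
  rewrite dependentP; split=> [[k [ks k0 nc]] | [x /rV4_neq0 x0 /rV4_eq0[]]].
    case: k ks k0 nc => [|k1 [|k2 [|k3 [|k4 []]]]] // _ k0.
    rewrite /null_comb /= !big_cons !big_nil /= => -[e1 e2 e3 e4].
    exists (\row_i [:: k1; k2; k3; k4]`_i).
      apply/rV4_neq0; rewrite !mxE /=.
      by move: k0; rewrite /= orbF => /orP[|/orP[|/orP[]]]; auto.
    by apply/rV4_eq0; rewrite !mxE !big_ord_recl !big_ord0 !mxE /=; split; lra.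
  rewrite [x]row4E !mxE !big_ord_recl !big_ord0 !mxE /= => e1 e2 e3 e4.
  exists [:: x 0 0; x 0 1; x 0 2; x 0 3]; split=> //.
    by case: x0 => [|[|[|]]] /negPf x0; rewrite /= x0 ?orbT.
  by rewrite /null_comb /= !big_cons !big_nil /=; split; lra.
rewrite left_kernel_right_kernel; split=> [[y /rV4_neq0 y0 /rV4_eq0[]] | [p [q [r [w [pqrw fs]]]]]].
  rewrite [y]row4E !mxE !big_ord_recl !big_ord0 !mxE /= => e1 e2 e3 e4.
  exists (y 0 0), (y 0 1), (y 0 2), (y 0 3); split=> // g.
  by rewrite !inE => /or4P[] /eqP ->; rewrite /bform; lra.
exists (\row_j [:: p; q; r; w]`_j).
  by apply/rV4_neq0; rewrite !mxE.
have := fs g1; have := fs g2; have := fs g3; have := fs g4.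
rewrite /bform !inE !eqxx ?orbT => /(_ isT) f4 /(_ isT) f3 /(_ isT) f2 /(_ isT) f1.
by apply/rV4_eq0; rewrite !mxE !big_ord_recl !big_ord0 !mxE /=; split; lra.
Qed.

Lemma row_mx_pt3 (x y z : R) :
  row_mx (pt3 x y z) (1 : 'rV_1) = \row_j [:: x; y; z; 1]`_j :> 'rV_(3 + 1).
Proof.
apply/rowP => j; rewrite !mxE; case: splitP => [j' ->|k ->]; last by rewrite (ord1 k) !mxE.
by rewrite !mxE; case: j' => -[|[|[|]]].
Qed.

Lemma quad_val_pt3 (A : 'M[R]_(3 + 1)) x y z : quad_val A (pt3 x y z) =
  x ^+ 2 * A 0 0 + y ^+ 2 * A 1 1 + z ^+ 2 * A 2 2 + A 3 3 + x * y * (A 0 1 + A 1 0)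
  + x * z * (A 0 2 + A 2 0) + y * z * (A 1 2 + A 2 1) + x * (A 0 3 + A 3 0)
  + y * (A 1 3 + A 3 1) + z * (A 2 3 + A 3 2).
Proof.
have lift1 : lift ord0 ord0 = 1 :> 'I_(3 + 1) by apply: val_inj.
have lift2 : lift ord0 (lift ord0 ord0) = 2 :> 'I_(3 + 1) by apply: val_inj.
have lift3 : lift ord0 (lift ord0 (lift ord0 ord0)) = 3 :> 'I_(3 + 1) by apply: val_inj.
rewrite /quad_val row_mx_pt3 !mxE !big_ord_recl !big_ord0 !mxE /=.
by rewrite !big_ord_recl !big_ord0 !mxE /= lift3 lift2 lift1; ring.
Qed.

Definition bform_quadric (p q r w : R) : 'M[R]_(3 + 1) :=
  \matrix_(i, j) (nth [::] [:: [:: 0; 0; p; q]; [:: 0; 0; r; w];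
                             [:: p; r; 0; 0]; [:: q; w; 0; 0]] i)`_j.

Lemma quad_val_bform_quadric p q r w x y z :
  quad_val (bform_quadric p q r w) (pt3 x y z) = 2 * (x * (p * z + q) + y * (r * z + w)).
Proof. by rewrite quad_val_pt3 !mxE /=; ring. Qed.

Lemma nondeg_bform_quadric p q r w : p * w != q * r -> nondeg_quadric (bform_quadric p q r w).
Proof.
rewrite -subr_eq0 => D0; split.
  by apply/matrixP => -[[|[|[|[|//]]]] ?] [[|[|[|[|//]]]] ?]; rewrite !mxE.
pose B : 'M[R]_(3 + 1) := \matrix_(i, j) (nth [::] [:: [:: 0; 0; w; - r]; [:: 0; 0; - q; p];
                                                  [:: w; - q; 0; 0]; [:: - r; p; 0; 0]] i)`_j.
have AB : bform_quadric p q r w *m B = (p * w - q * r)%:M.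
  apply/matrixP => -[[|[|[|[|//]]]] ?] [[|[|[|[|//]]]] ?];
  by rewrite !mxE !big_ord_recl !big_ord0 !mxE /=; ring.
apply: contraNneq D0 => A0.
have := congr1 determinant AB; rewrite det_mulmx A0 mul0r det_scalar.
by move/esym/eqP; rewrite expf_eq0.
Qed.

Lemma bform_parallel_dirE p q r w g h : p * w != q * r ->
  bform p q r w g = 0 -> bform p q r w h = 0 -> parallel_dir g h <-> c_lam g = c_lam h.
Proof.
move=> D fg fh; have m (x : R) := congr1 ( *%R x).
have normal_neq0 l : p * l + q != 0 \/ r * l + w != 0.
  have [a0|] := eqVneq (p * l + q) 0; last by left.
  have [b0|] := eqVneq (r * l + w) 0; last by right.
  suff : p * w - q * r = 0 by move/eqP; rewrite subr_eq0 (negPf D).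
  by have := m p _ _ b0; have := m r _ _ a0; lra.
split=> [gh | lgh]; last first.
  apply: (parallel_of_common_normal (normal_neq0 (c_lam g))); rewrite /bform in fg fh; first lra.
  by rewrite lgh; lra.
have [d d2 [ch sh]] := unit_vectors_proportional (cos2Dsin2 _) (cos2Dsin2 _) gh.
have eg : cs g * (p * c_lam g + q) + sn g * (r * c_lam g + w) = 0.
  by rewrite /bform in fg; lra.
have eh : cs g * (p * c_lam h + q) + sn g * (r * c_lam h + w) = 0.
  by apply: (mulfI (sqr1_neq0 d2)); move: fh; rewrite mulr0 /bform ch sh; lra.
move: (parallel_of_common_normal (unit_vector_neq0 (cos2Dsin2 _)) eg eh) => /eqP.
rewrite -subr_eq0.
have -> : (r * c_lam g + w) * (p * c_lam h + q) - (r * c_lam h + w) * (p * c_lam g + q)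
  = (q * r - p * w) * (c_lam g - c_lam h) by ring.
by rewrite mulf_eq0 subr_eq0 eq_sym (negPf D) subr_eq0 => /eqP.
Qed.

Lemma parallel_dir_of_parallel_c g h : orthogonal_c g -> orthogonal_c h ->
  parallel_c g h -> parallel_dir g h.
Proof.
move=> og oh [k]; rewrite /c_dir -[k *: _]add0r -pt3_0 pt3_addZ !add0r.
rewrite (og : c_delta g = 0) (oh : c_delta h = 0) => /pt3_inj[cg sg _].
by rewrite /parallel_dir cg sg; ring.
Qed.

Lemma same_ruling_of_bform p q r w g h : p * w != q * r ->
  orthogonal_c g -> orthogonal_c h -> bform p q r w g = 0 -> bform p q r w h = 0 ->
  same_ruling g h.
Proof.
move=> D og oh fg fh; have gh := bform_parallel_dirE D fg fh.
have [lgh|lgh] := eqVneq (c_lam g) (c_lam h).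
  by left; apply/line_of_eqE => //; split=> //; apply/gh.
right; split=> [|/(parallel_dir_of_parallel_c og oh)/gh/eqP]; last by rewrite (negPf lgh).
apply/seteqP; split=> // x [/(line_of_orthogonal _ og)[t ->]].
by move=> /(line_of_orthogonal _ oh)[u /pt3_inj[_ _ /eqP]]; rewrite (negPf lgh).
Qed.

Lemma hyperboloidal_of_bform s p q r w : p * w != q * r ->
  {in s, forall g, orthogonal_c g} -> {in s, forall g, bform p q r w g = 0} ->
  hyperboloidal s.
Proof.
move=> D os fs; exists (bform_quadric p q r w); split; first exact: nondeg_bform_quadric.
split=> [g gs x /(line_of_orthogonal _ (os g gs))[t ->] | g h gs hs].
  by rewrite quad_val_bform_quadric; have := congr1 ( *%R t) (fs g gs); rewrite /bform; lra.
exact: same_ruling_of_bform D (os g gs) (os h hs) (fs g gs) (fs h hs).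
Qed.

Lemma same_ruling_lam g h : orthogonal_c g -> orthogonal_c h -> same_ruling g h ->
  line_of g = line_of h \/ c_lam g != c_lam h.
Proof.
move=> og oh [->|[gh _]]; [by left | right; apply/eqP => lgh].
have : (line_of g `&` line_of h) (pt3 0 0 (c_lam g)).
  by split; [apply/(line_of_orthogonal _ og) | apply/(line_of_orthogonal _ oh)];
    exists 0; rewrite !mul0r ?lgh.
by rewrite gh.
Qed.

Lemma bform_of_hyperboloidal s g1 g2 g3 : {in s, forall g, orthogonal_c g} ->
  hyperboloidal s -> g1 \in s -> g2 \in s -> g3 \in s ->
  c_lam g1 != c_lam g2 -> c_lam g1 != c_lam g3 -> c_lam g2 != c_lam g3 -> vanishing_form s.
Proof.
move=> os [A [[AT detA] [onA _]]] g1s g2s g3s n12 n13 n23.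
have sym i j : A i j = A j i by rewrite -{1}AT mxE.
have onl g t : g \in s -> quad_val A (pt3 (t * cs g) (t * sn g) (c_lam g)) = 0.
  by move=> gs; apply: (onA g gs); apply/(line_of_orthogonal _ (os g gs)); exists t.
have root g : g \in s -> A 2 2 * c_lam g ^+ 2 + (A 2 3 + A 3 2) * c_lam g + A 3 3 = 0.
  by move=> gs; have := onl g 0 gs; rewrite quad_val_pt3; lra.
have [a0 b0 c0] := quadratic_three_roots n12 n13 n23 (root _ g1s) (root _ g2s) (root _ g3s).
exists (A 0 2 + A 2 0), (A 0 3 + A 3 0), (A 1 2 + A 2 1), (A 1 3 + A 3 1); split.
  have [q0|] := eqVneq (A 0 3 + A 3 0) 0; last by right; left.
  have [w0|] := eqVneq (A 1 3 + A 3 1) 0; last by right; right; right.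
  case/negP: detA; apply/det0P; exists (delta_mx 0 3).
    by apply/negP => /eqP/matrixP/(_ 0 3)/eqP; rewrite !mxE !eqxx oner_eq0.
  rewrite -rowE; apply/rV4_eq0; rewrite !mxE.
  by have := sym 0 3; have := sym 1 3; have := sym 2 3; split; lra.
by move=> g gs; have := onl g 1 gs; have := onl g (-1) gs; rewrite !quad_val_pt3 /bform; lra.
Qed.

Lemma vanishing_form_of_concurrent_coplanar a b c d :
  {in [:: a; b; c; d], forall g, orthogonal_c g} ->
  concurrent_l0 [:: a; b] -> coplanar_l0 [:: c; d] -> vanishing_form [:: a; b; c; d].
Proof.
move=> os; rewrite concurrent_l0E ?coplanar_l0E; try by apply: sub_in1 os; apply/allP;
  rewrite /= !inE !eqxx ?orbT.
move=> [t lab] [m0 [m1 [m01 mcd]]].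
exists m0, (- (m0 * t)), m1, (- (m1 * t)); split; first by case: m01; auto.
move=> g; rewrite !inE /bform => /or4P[]/eqP->.
- by rewrite (lab a) ?inE ?eqxx //; ring.
- by rewrite (lab b) ?inE ?eqxx ?orbT //; ring.
- by have := congr1 ( *%R (c_lam c - t)) (mcd c (mem_head _ _)); lra.
- have dcd : d \in [:: c; d] by rewrite !inE eqxx orbT.
  by have := congr1 ( *%R (c_lam d - t)) (mcd d dcd); lra.
Qed.

Lemma degenerate_vanishing_form g1 g2 g3 g4 p q r w :
  {in [:: g1; g2; g3; g4], forall g, orthogonal_c g} ->
  p != 0 \/ q != 0 \/ r != 0 \/ w != 0 -> p * w = q * r ->
  {in [:: g1; g2; g3; g4], forall g, bform p q r w g = 0} ->
  (dependent_c [:: g1; g2; g3] \/ dependent_c [:: g1; g2; g4] \/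
   dependent_c [:: g1; g3; g4] \/ dependent_c [:: g2; g3; g4]) \/
  ((concurrent_l0 [:: g1; g2] /\ coplanar_l0 [:: g3; g4]) \/
   (concurrent_l0 [:: g1; g3] /\ coplanar_l0 [:: g2; g4]) \/
   (concurrent_l0 [:: g1; g4] /\ coplanar_l0 [:: g2; g3]) \/
   (concurrent_l0 [:: g2; g3] /\ coplanar_l0 [:: g1; g4]) \/
   (concurrent_l0 [:: g2; g4] /\ coplanar_l0 [:: g1; g3]) \/
   (concurrent_l0 [:: g3; g4] /\ coplanar_l0 [:: g1; g2])).
Proof.
move=> os pqrw D fs; have [a [b [m0 [m1 [ab m01 fE]]]]] := rank_one_form pqrw D.
pose Z g := orthogonal_c g /\ a * c_lam g + b = 0.
pose P g := orthogonal_c g /\ m0 * cs g + m1 * sn g = 0.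
have ZP g : g \in [:: g1; g2; g3; g4] -> Z g \/ P g.
  move=> gs; have := fs g gs; rewrite /bform fE => /eqP; rewrite mulf_eq0.
  by case/orP=> /eqP h; [left | right]; split=> //; apply: os.
have in2 (Q : cstr R -> Prop) x y : Q x -> Q y -> {in [:: x; y], forall g, Q g}.
  by move=> Qx Qy g; rewrite !inE => /orP[]/eqP->.
apply: (two_class_split4 (Z := Z) (P := P) (D3 := fun x y z => dependent_c [:: x; y; z])
  (C2 := fun x y => concurrent_l0 [:: x; y]) (P2 := fun x y => coplanar_l0 [:: x; y]));
  try by apply: ZP; rewrite !inE eqxx ?orbT.
- by move=> x y z [ox lx] [oy ly] [oz lz]; apply: dependent3_of_lam_eq;
    apply: (eq_of_affine_roots ab).
- by move=> x y z [ox cx] [oy cy] [oz cz]; apply: dependent3_of_parallel_dir;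
    apply: (parallel_of_common_normal m01).
- move=> x y [ox lx] [oy ly]; apply/(concurrent_l0E (in2 _ _ _ ox oy)).
  by exists (c_lam x); apply: in2 => //; apply: (eq_of_affine_roots ab).
- move=> x y [ox cx] [oy cy]; apply/(coplanar_l0E (in2 _ _ _ ox oy)).
  by exists m0, m1; split=> //; apply: in2.
Qed.

Lemma dependent4_of_concurrent_coplanar g1 g2 g3 g4 a b c d :
  {in [:: g1; g2; g3; g4], forall g, orthogonal_c g} ->
  {subset [:: a; b; c; d] <= [:: g1; g2; g3; g4]} ->
  {subset [:: g1; g2; g3; g4] <= [:: a; b; c; d]} ->
  concurrent_l0 [:: a; b] -> coplanar_l0 [:: c; d] -> dependent_c [:: g1; g2; g3; g4].
Proof.
move=> os sub sub' ab cd; apply/dependent4E; apply: (vanishing_form_sub sub').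
exact: vanishing_form_of_concurrent_coplanar (sub_in1 sub os) ab cd.
Qed.

Lemma dependent4_of_hyperboloidal g1 g2 g3 g4 :
  {in [:: g1; g2; g3; g4], forall g, orthogonal_c g} ->
  hyperboloidal [:: g1; g2; g3; g4] -> dependent_c [:: g1; g2; g3; g4].
Proof.
move=> os hyp; have [A [_ [_ sr]]] := hyp.
have [m1 m2 m3] : [/\ g1 \in [:: g1; g2; g3; g4], g2 \in [:: g1; g2; g3; g4]
  & g3 \in [:: g1; g2; g3; g4]] by rewrite !inE !eqxx ?orbT.
have lines x y : x \in [:: g1; g2; g3; g4] -> y \in [:: g1; g2; g3; g4] ->
    line_of x = line_of y \/ c_lam x != c_lam y.
  by move=> xs ys; apply: same_ruling_lam (os x xs) (os y ys) (sr x y xs ys).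
have pair x y : x \in [:: g1; g2; g3; g4] -> y \in [:: g1; g2; g3; g4] ->
    line_of x = line_of y -> dependent_c [:: x; y].
  by move=> xs ys xy; apply/dependent2E; apply/(line_of_eqE (os x xs) (os y ys)).
have [e12|n12] := lines _ _ m1 m2.
  by apply: (dependent_mask (m := [:: true; true; false; false])); apply: pair.
have [e13|n13] := lines _ _ m1 m3.
  by apply: (dependent_mask (m := [:: true; false; true; false])); apply: pair.
have [e23|n23] := lines _ _ m2 m3.
  by apply: (dependent_mask (m := [:: false; true; true; false])); apply: pair.
by apply/dependent4E; apply: (bform_of_hyperboloidal os hyp m1 m2 m3).
Qed.

End Constraints.

Theorem lemma21 (R : realType) :
  (forall g1 g2 : cstr R, orthogonal_c g1 -> orthogonal_c g2 ->
     (dependent_c [:: g1; g2] <-> line_of g1 = line_of g2)) /\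
  (forall g1 g2 g3 : cstr R, orthogonal_c g1 -> orthogonal_c g2 -> orthogonal_c g3 ->
     (dependent_c [:: g1; g2; g3] <->
        ((dependent_c [:: g1; g2] \/ dependent_c [:: g1; g3] \/ dependent_c [:: g2; g3])
         \/ coplanar_l0 [:: g1; g2; g3]
         \/ concurrent_l0 [:: g1; g2; g3]))) /\
  (forall g1 g2 g3 g4 : cstr R,
     orthogonal_c g1 -> orthogonal_c g2 -> orthogonal_c g3 -> orthogonal_c g4 ->
     (dependent_c [:: g1; g2; g3; g4] <->
        ((dependent_c [:: g1; g2; g3] \/ dependent_c [:: g1; g2; g4] \/
          dependent_c [:: g1; g3; g4] \/ dependent_c [:: g2; g3; g4])
         \/ hyperboloidal [:: g1; g2; g3; g4]
         \/ ((concurrent_l0 [:: g1; g2] /\ coplanar_l0 [:: g3; g4]) \/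
             (concurrent_l0 [:: g1; g3] /\ coplanar_l0 [:: g2; g4]) \/
             (concurrent_l0 [:: g1; g4] /\ coplanar_l0 [:: g2; g3]) \/
             (concurrent_l0 [:: g2; g3] /\ coplanar_l0 [:: g1; g4]) \/
             (concurrent_l0 [:: g2; g4] /\ coplanar_l0 [:: g1; g3]) \/
             (concurrent_l0 [:: g3; g4] /\ coplanar_l0 [:: g1; g2]))))).
Proof.
split; [|split].
- move=> g1 g2 o1 o2; exact: iff_trans (dependent2E g1 g2) (iff_sym (line_of_eqE o1 o2)).
- move=> g1 g2 g3 o1 o2 o3; have := dependent3E g1 g2 g3.
  by have := concurrent3E o1 o2 o3; have := coplanar3E o1 o2 o3; tauto.
move=> g1 g2 g3 g4 o1 o2 o3 o4.
have os : {in [:: g1; g2; g3; g4], forall g, orthogonal_c g}.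
  by move=> g; rewrite !inE => /or4P[]/eqP->.
split=> [/dependent4E[p [q [r [w [pqrw fs]]]]] | [dep3 | [hyp | cc]]].
- have [D|D] := eqVneq (p * w) (q * r); last by right; left; exact: hyperboloidal_of_bform D os fs.
  by have := degenerate_vanishing_form os pqrw D fs; tauto.
- case: dep3 => [|[|[|]]] dep3.
  + by apply: (dependent_mask (m := [:: true; true; true; false])).
  + by apply: (dependent_mask (m := [:: true; true; false; true])).
  + by apply: (dependent_mask (m := [:: true; false; true; true])).
  + by apply: (dependent_mask (m := [:: false; true; true; true])).
- exact: dependent4_of_hyperboloidal.
- by case: cc => [|[|[|[|[|]]]]] [ab cd]; apply: (dependent4_of_concurrent_coplanar os _ _ ab cd);
    apply/allP; rewrite /= !inE !eqxx ?orbT.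
Qed.
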